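(* Consider the finite-data game $\mathcal{G}_N$ described in the context. Every truth-leaning equilibrium messaging strategy $\sigma^*$ of $\mathcal{G}_N$ is a best response to the beliefs $q_{\sigma^*}$, and it satisfies: (a) every on-path message lies in $\mathcal{T}_N$; (b) for every type $t$, if $\mathbb{E}_{\pi(\cdot|t)}[\theta] < \max_{m\subseteq t}\mathbb{E}_{\beta_{\sigma^*}(\cdot|m)}[\theta]$, then the message $m=t$ is off-path; (c) for every type $t$, if $\mathbb{E}_{\pi(\cdot|t)}[\theta] > \max_{m\subseteq t}\mathbb{E}_{\beta_{\sigma^*}(\cdot|m)}[\theta]$, then $\sigma^*(t\mid t)=1$. Furthermore, there always exists an equilibrium $(\sigma^*,\beta_{\sigma^*})$ in which $\sigma^*$ is a best response to $q_{\sigma^*}$ and (a)–(c) hold, and every such equilibrium has the same outcome $u^*(t)=\max_{m\subseteq t}\mathbb{E}_{\beta_{\sigma^*}(\cdot|m)}[\theta]$, which coincides with the (unique) truth-leaning equilibrium outcome.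
   Context: Finite-data game $\mathcal{G}_N$. States $\Theta=\{\theta_1,\dots,\theta_J\}\subset\mathbb{R}$ with $\theta_1\le\cdots\le\theta_J$ and common prior $\beta_0$ on $\Theta$. A finite outcome set $\mathcal{D}=\{1,\dots,D\}$; for each $j$, $f_j$ is a probability distribution on $\mathcal{D}$. Nature draws $\theta\sim\beta_0$, then a number $n\in\{0,\dots,N\}$ from a pmf $g_N$ (with cdf $G_N$) whose support contains $N$, then $n$ i.i.d. draws from $f_\theta$. The sender's type is the dataset $t=\frac1N(t_1,\dots,t_D)$, $t_d$ the number of draws equal to $d$; $\mathcal{T}_N$ is the set of such datasets, with probability $q(t)=\frac{n(t)!}{\prod_d t_d!}g_N(n(t))\sum_{j'}\beta_0(\theta_{j'})\prod_d f_{j'}(d)^{t_d}$, $n(t)=\sum_d t_d$. The sender's posterior is $\pi(\theta_j|t)=\beta_0(\theta_j)\prod_d f_j(d)^{t_d}/\sum_{j'}\beta_0(\theta_{j'})\prod_d f_{j'}(d)^{t_d}$. The message space $\mathcal{M}_N$ consists of all vectors $\frac1N(m_1,\dots,m_D)$ of nonnegative integers with $\sum_d m_d\le N$ (so $\mathcal{T}_N\subseteq\mathcal{M}_N$); type $t$ may send $m$ iff $m\subseteq t$, meaning $m_d\le t_d$ for all $d$. A messaging strategy is $\sigma:\mathcal{T}_N\to\Delta\mathcal{M}_N$ supported on feasible messages. After message $m$ the receiver holds a belief $q(\cdot|m)$ over types, hence state belief $\beta(\theta_j|m)=\sum_t q(t|m)\pi(\theta_j|t)$, and takes action $\mathbb{E}_{\beta(\cdot|m)}[\theta]$,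 which is every sender type's payoff. Equilibrium means perfect Bayesian equilibrium. Given $\sigma$, the beliefs $q_\sigma(\cdot|m)$ are: Bayes' rule for on-path $m$; the point mass on type $t=m$ for off-path $m\in\mathcal{T}_N$; and for off-path $m\in\mathcal{M}_N\setminus\mathcal{T}_N$, the belief $q_\sigma(\cdot|t')$ at a dataset $t'\in\mathcal{T}_N$, $t'\supseteq m$, minimizing the induced receiver expectation of $\theta$. $\beta_\sigma(\cdot|m)$ is the state belief induced by $q_\sigma(\cdot|m)$. The outcome of an equilibrium is $u^*(t)=\max_{m\subseteq t}\mathbb{E}_{\beta_\sigma(\cdot|m)}[\theta]$. Truth-leaning: for $\epsilon=(\epsilon_t,\epsilon_{t|t})_{t\in\mathcal{T}_N}$ with positive entries, the perturbed game $\mathcal{G}_\epsilon$ is identical except that type $t$'s payoff from sending exactly $m=t$ is increased by $\epsilon_t$, and type $t$ sends $t$ with probability at least $\epsilon_{t|t}$ (it is a commitment type with that probability). A strategy $\sigma^*$ is a truth-leaning equilibrium strategy of $\mathcal{G}_N$ if it is the limit of PBE strategies $\sigma^k$ of games $\mathcal{G}_{\epsilon^k}$ with $\epsilon^k\to0$. *)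

From mathcomp Require Import all_boot all_order all_algebra.
Set Implicit Arguments. Unset Strict Implicit. Unset Printing Implicit Defensive.
Import Order.TTheory GRing.Theory Num.Theory.
Local Open Scope ring_scope.

Section Game.
(* J states theta_1 <= ... <= theta_J, prior b0, D outcomes, signal
   distributions f j, sample-size pmf g on {0,...,N}. *)
Variables (R : realFieldType) (J D N : nat).
Variables (theta b0 : 'I_J -> R) (f : 'I_J -> 'I_D -> R) (g : nat -> R).

(* A vector of counts (m_1,...,m_D) with entries <= N.  The paper's
   dataset/message is (1/N) times this vector; we use the counts. *)
Definition Msg := {ffun 'I_D -> 'I_N.+1}.

Definition size_of (m : Msg) : nat := (\sum_(d < D) (m d : nat))%N.
Definition inM (m : Msg) : bool := (size_of m <= N)%N.
Definition subm (m t : Msg) : bool := [forall d, (m d <= t d)%N].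

Definition lik (j : 'I_J) (t : Msg) : R := \prod_(d < D) f j d ^+ (t d).
Definition marg (t : Msg) : R := \sum_(j < J) b0 j * lik j t.
Definition multinom (t : Msg) : R :=
  (size_of t)`!%:R / (\prod_(d < D) (t d)`!)%N%:R.
Definition qprob (t : Msg) : R := multinom t * g (size_of t) * marg t.
Definition inT (t : Msg) : bool := inM t && (0 < qprob t).
Definition post (t : Msg) (j : 'I_J) : R := b0 j * lik j t / marg t.
Definition post_exp (t : Msg) : R := \sum_(j < J) post t j * theta j.

(* messaging strategies: s t m = probability that type t sends m *)
Definition is_strategy (s : Msg -> Msg -> R) : Prop :=
  forall t, inT t ->
    [/\ forall m, 0 <= s t m, \sum_m s t m = 1 &
        forall m, 0 < s t m -> subm m t].

Definition mass (s : Msg -> Msg -> R) (m : Msg) : R :=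
  \sum_(t | inT t) qprob t * s t m.
Definition onpath (s : Msg -> Msg -> R) (m : Msg) : bool := 0 < mass s m.
Definition bayes (s : Msg -> Msg -> R) (m t : Msg) : R :=
  qprob t * s t m / mass s m.

(* receiver beliefs over types: mu m t = q(t | m) *)
Definition is_belief (mu : Msg -> Msg -> R) : Prop :=
  forall m, (forall t, inT t -> 0 <= mu m t) /\ \sum_(t | inT t) mu m t = 1.
Definition state_bel (mu : Msg -> Msg -> R) (m : Msg) (j : 'I_J) : R :=
  \sum_(t | inT t) mu m t * post t j.
(* receiver action E_{beta(.|m)}[theta] = every type's payoff *)
Definition act (mu : Msg -> Msg -> R) (m : Msg) : R :=
  \sum_(j < J) state_bel mu m j * theta j.

Definition qbel0 (s : Msg -> Msg -> R) (m t : Msg) : R :=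
  if onpath s m then bayes s m t else (t == m)%:R.
Definition cand (m t' : Msg) : bool := inT t' && subm m t'.
Definition qsig (s : Msg -> Msg -> R) (m : Msg) : Msg -> R :=
  if onpath s m || inT m then qbel0 s m
  else match [pick t' | cand m t' &&
                [forall t'', cand m t'' ==> (act (qbel0 s) t' <= act (qbel0 s) t'')]]
       with Some t' => qbel0 s t' | None => qbel0 s m end.
Definition beta_sig (s : Msg -> Msg -> R) (m : Msg) (j : 'I_J) : R :=
  state_bel (qsig s) m j.
Definition act_sig (s : Msg -> Msg -> R) (m : Msg) : R := act (qsig s) m.

Definition best_response_to (mu : Msg -> Msg -> R) (s : Msg -> Msg -> R) : Prop :=
  forall t, inT t -> forall m, 0 < s t m ->
    forall m', subm m' t -> act mu m' <= act mu m.

Definition ustar (s : Msg -> Msg -> R) (t : Msg) : R :=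
  \big[Order.max/act_sig s t]_(m | subm m t) act_sig s m.

(* PBE strategies of the perturbed game G_eps: with probability epsc t
   type t is a commitment type sending t; otherwise it plays rho t,
   a best response to payoff E[theta|mu m] + eps t [m = t]. *)
Definition pbe_perturbed (eps epsc : Msg -> R) (s : Msg -> Msg -> R) : Prop :=
  (forall t, inT t -> epsc t <= 1) /\
  exists (rho mu : Msg -> Msg -> R),
   [/\ is_strategy rho, is_belief mu,
     (forall t, inT t -> forall m,
         s t m = epsc t * (m == t)%:R + (1 - epsc t) * rho t m),
     (forall m, onpath s m -> forall t, inT t -> mu m t = bayes s m t) &
     (forall t, inT t -> forall m, 0 < rho t m -> forall m', subm m' t ->
         act mu m' + eps t * (m' == t)%:R <= act mu m + eps t * (m == t)%:R)].

Definition cvg_to (u : nat -> R) (l : R) : Prop :=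
  forall e, 0 < e -> exists K, forall k, (K <= k)%N -> `|u k - l| < e.

Definition truth_leaning (s : Msg -> Msg -> R) : Prop :=
  exists (eps epsc : nat -> Msg -> R) (sk : nat -> Msg -> Msg -> R),
   [/\ forall k t, inT t -> 0 < eps k t /\ 0 < epsc k t,
       forall t, inT t -> cvg_to (fun k => eps k t) 0 /\ cvg_to (fun k => epsc k t) 0,
       forall k, pbe_perturbed (eps k) (epsc k) (sk k) &
       forall t, inT t -> forall m, cvg_to (fun k => sk k t m) (s t m)].

Definition prop_a (s : Msg -> Msg -> R) : Prop := forall m, onpath s m -> inT m.
Definition prop_b (s : Msg -> Msg -> R) : Prop :=
  forall t, inT t -> post_exp t < ustar s t -> ~~ onpath s t.
Definition prop_c (s : Msg -> Msg -> R) : Prop :=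
  forall t, inT t -> ustar s t < post_exp t -> s t t = 1.

Definition abc_equilibrium (s : Msg -> Msg -> R) : Prop :=
  [/\ is_strategy s, best_response_to (qsig s) s, prop_a s, prop_b s & prop_c s].

End Game.

(* In a perturbed game every dataset is on path
   through its commitment type, and a strategic type sends a message other than
   its own dataset only if this strictly beats the truth-telling bonus; hence
   such a message pools types whose posterior means lie strictly below its
   value, a message outside [T_N] cannot be sent at all, and the value of a
   dataset never exceeds its own posterior mean.  These strict inequalities
   survive the limit as best responses and properties (a)-(c).

   If [s] satisfies (a)-(c) with outcome [u] and [w] is monotone
   for inclusion, then [sum_t q t (p t - u t) (w t - u t) <= 0]: by (c) the
   types with [p t > u t] are truthful, and every message pools its senders
   at mean [u].  Taking [w] to be the outcome of a second such equilibrium and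
   adding the two inequalities gives [sum_t q t (u1 t - u2 t)^2 <= 0].

   Peel off, repeatedly, a nonempty set [U] of remaining types,
   closed under supersets, of largest average posterior mean [c].  The types
   of [U] with [p t >= c] are truthful, and those with [p t < c] mimic subsets
   of themselves in [U] with [p > c], in proportions given by a flow from the
   supply-demand theorem, whose Hall condition is the maximality of [c]. *)

From Pilot Require Import Defs.
From mathcomp Require Import all_boot all_order all_algebra.
From mathcomp Require Import ring lra.
From mathcomp Require Import all_classical all_reals all_analysis.
(* Re-imported so that the finite-set lemmas shadow their namesakes in classical_sets. *)
From mathcomp Require Import fintype finset.
Import Order.TTheory GRing.Theory Num.Theory numFieldNormedType.Exports.
Set Implicit Arguments. Unset Strict Implicit. Unset Printing Implicit Defensive.
Local Open Scope ring_scope.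

Section Support.
Variables (R : numDomainType) (Z : finType).
Implicit Types (A B : {set Z}) (F G : Z -> R).

Definition restrict A F z := if z \in A then F z else 0.

Definition supp F := [set z | F z != 0].

Lemma restrict_ge0 A F : (forall z, 0 <= F z) -> forall z, 0 <= restrict A F z.
Proof. by move=> F0 z; rewrite /restrict; case: ifP. Qed.

Lemma restrictC A F z : restrict A F z + restrict (~: A) F z = F z.
Proof. by rewrite /restrict inE; case: (z \in A); rewrite ?addr0 ?add0r. Qed.

Lemma sum_restrict B A F : \sum_(z in B) restrict A F z = \sum_(z in B :&: A) F z.
Proof.
rewrite [RHS]big_mkcond [LHS]big_mkcond; apply: eq_bigr => z _.
by rewrite /restrict inE; case: (z \in B); case: (z \in A).
Qed.

Lemma sum_restrictT A F : \sum_z restrict A F z = \sum_(z in A) F z.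
Proof. by rewrite [RHS]big_mkcond. Qed.

Lemma sum_restrictC A F :
  \sum_z F z = \sum_(z in A) F z + \sum_(z in ~: A) F z.
Proof.
by rewrite -!sum_restrictT -big_split /=; apply: eq_bigr => z _; rewrite restrictC.
Qed.

Lemma sum_le_subset A B F : A \subset B -> (forall z, 0 <= F z) ->
  \sum_(z in A) F z <= \sum_(z in B) F z.
Proof.
move=> AB F0; rewrite [leRHS](big_setID A) /= (setIidPr AB) lerDl.
exact: sumr_ge0.
Qed.

Lemma subset_supp F G : (forall z, G z != 0 -> F z != 0) -> supp G \subset supp F.
Proof. by move=> GF; apply/subsetP => z; rewrite !inE; apply: GF. Qed.

Lemma card_supp_lt F G z : (forall z, G z != 0 -> F z != 0) ->
  F z != 0 -> G z = 0 -> (#|supp G| < #|supp F|)%N.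
Proof.
move=> GF Fz Gz; apply: proper_card; apply/properP; split; first exact: subset_supp.
by exists z; rewrite !inE ?Fz ?Gz ?eqxx.
Qed.

Lemma supp_restrict A F z : restrict A F z != 0 -> F z != 0.
Proof. by rewrite /restrict; case: ifP => //; rewrite eqxx. Qed.

Lemma sum_delta (z0 : Z) (c : R) : \sum_z (z == z0)%:R * c = c.
Proof.
by rewrite (bigD1 z0) //= eqxx mul1r big1 ?addr0 // => z /negbTE ->; rewrite mul0r.
Qed.

Lemma sum_delta_in A (z0 : Z) (c : R) :
  \sum_(z in A) (z == z0)%:R * c = (z0 \in A)%:R * c.
Proof.
rewrite big_mkcond -(sum_delta z0 ((z0 \in A)%:R * c)); apply: eq_bigr => z _.
by case: eqP => [->|_]; case: ifP; rewrite ?mul0r ?mul1r.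
Qed.

Definition shift F (z0 : Z) (d : R) z := F z - (z == z0)%:R * d.

Lemma shift_ge0 F z0 d : (forall z, 0 <= F z) -> d <= F z0 ->
  forall z, 0 <= shift F z0 d z.
Proof.
move=> F0 dF z; rewrite /shift; case: eqP => [->|_]; first by rewrite mul1r subr_ge0.
by rewrite mul0r subr0.
Qed.

Lemma shift_id F z0 d z : z != z0 -> shift F z0 d z = F z.
Proof. by rewrite /shift => /negbTE ->; rewrite mul0r subr0. Qed.

Lemma sum_shift B F z0 d :
  \sum_(z in B) shift F z0 d z = \sum_(z in B) F z - (z0 \in B)%:R * d.
Proof. by rewrite sumrB sum_delta_in. Qed.

Lemma sum_shiftT F z0 d : \sum_z shift F z0 d z = \sum_z F z - d.
Proof. by rewrite sumrB sum_delta. Qed.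

Lemma supp_shift F z0 d z : F z0 != 0 -> shift F z0 d z != 0 -> F z != 0.
Proof. by move=> Fz0; case: (eqVneq z z0) => [->|/shift_id ->]. Qed.

End Support.

Section SupplyDemand.
Variables (R : realDomainType) (X Y : finType) (e : X -> Y -> bool).
Implicit Types (a : X -> R) (b : Y -> R) (A : {set X}).

Definition nbhd A : {set Y} := [set y | [exists x in A, e x y]].

Definition hall_condition a b :=
  [/\ forall x, 0 <= a x, forall y, 0 <= b y, \sum_x a x = \sum_y b y &
      forall A, \sum_(x in A) a x <= \sum_(y in nbhd A) b y].

Definition has_flow a b :=
  exists F : X -> Y -> R,
    [/\ forall x y, 0 <= F x y, forall x y, 0 < F x y -> e x y,
        forall x, \sum_y F x y = a x & forall y, \sum_x F x y = b y].

Definition supp_size a b := (#|supp a| + #|supp b|)%N.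

Definition slack a b A := \sum_(y in nbhd A) b y - \sum_(x in A) a x.

Lemma nbhdP A y : reflect (exists2 x, x \in A & e x y) (y \in nbhd A).
Proof.
by rewrite inE; apply: (iffP existsP) => [[x /andP[]]|[x ? ?]]; exists x => //; apply/andP.
Qed.

Lemma has_flow0 a b : (forall x, a x = 0) -> hall_condition a b -> has_flow a b.
Proof.
move=> a0 [_ b_ge0 sum_ab _].
have b0 y : b y = 0.
  have sum_b0 : \sum_y b y = 0 by rewrite -sum_ab big1.
  exact: (psumr_eq0P (fun y _ => b_ge0 y) sum_b0).
exists (fun _ _ => 0); split=> // [x y|x|y]; first by rewrite ltxx.
  by rewrite big1 ?a0.
by rewrite big1 ?b0.
Qed.

Lemma has_flowD a1 b1 a2 b2 a b :
  (forall x, a x = a1 x + a2 x) -> (forall y, b y = b1 y + b2 y) ->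
  has_flow a1 b1 -> has_flow a2 b2 -> has_flow a b.
Proof.
move=> aE bE [F1 [F1_ge0 F1e F1a F1b]] [F2 [F2_ge0 F2e F2a F2b]].
exists (fun x y => F1 x y + F2 x y); split=> [x y|x y|x|y].
- exact: addr_ge0.
- have := F1_ge0 x y; have := F2_ge0 x y.
  case: (ltrP 0 (F1 x y)) => [/F1e //|F1le0 _ F10 F2pos].
  by apply: F2e; lra.
- by rewrite big_split /= F1a F2a aE.
- by rewrite big_split /= F1b F2b bE.
Qed.

Lemma has_flow_edge x0 y0 d : e x0 y0 -> 0 <= d ->
  has_flow (fun x => (x == x0)%:R * d) (fun y => (y == y0)%:R * d).
Proof.
move=> e0 d_ge0; exists (fun x y => (x == x0)%:R * ((y == y0)%:R * d)).
split=> [x y|x y|x|y].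
- by rewrite !mulr_ge0.
- by case: eqP => [->|]; case: eqP => [->|]; rewrite ?mul0r ?mulr0 ?ltxx.
- by rewrite -mulr_sumr sum_delta.
- exact: sum_delta.
Qed.

Lemma hall_tight_in a b A : hall_condition a b ->
  \sum_(x in A) a x = \sum_(y in nbhd A) b y ->
  hall_condition (restrict A a) (restrict (nbhd A) b).
Proof.
move=> [a_ge0 b_ge0 _ hall] tight; split=> [|||B].
- exact: restrict_ge0.
- exact: restrict_ge0.
- by rewrite !sum_restrictT.
rewrite sum_restrict (le_trans (hall _)) // sum_restrict.
apply: sum_le_subset => //; apply/subsetP => y /nbhdP[x /setIP[xB xA] exy].
by apply/setIP; split; apply/nbhdP; exists x.
Qed.

Lemma hall_tight_out a b A : hall_condition a b ->
  \sum_(x in A) a x = \sum_(y in nbhd A) b y ->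
  hall_condition (restrict (~: A) a) (restrict (~: nbhd A) b).
Proof.
move=> [a_ge0 b_ge0 sum_ab hall] tight; split=> [|||B].
- exact: restrict_ge0.
- exact: restrict_ge0.
- apply: (@addrI _ (\sum_(x in A) a x)).
  by rewrite !sum_restrictT -sum_restrictC [in RHS]tight -sum_restrictC.
rewrite !sum_restrict.
set S := (B :&: ~: A) :|: A.
have SA : S :&: A = A.
  by apply/setP => x; rewrite !inE; case: (x \in A); rewrite ?andbT ?andbF ?orbT ?orbF.
have SDA : S :\: A = B :&: ~: A.
  by apply/setP => x; rewrite !inE; case: (x \in A); rewrite ?andbT ?andbF ?orbF.
have NS_sub : nbhd S :\: nbhd A \subset nbhd B :&: ~: nbhd A.
  apply/subsetP => y /setDP[/nbhdP[x /setUP[/setIP[xB _]|xA] exy] yNA].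
    by apply/setIP; split; [apply/nbhdP; exists x|rewrite inE].
  by case/negP: yNA; apply/nbhdP; exists x.
have := hall S.
rewrite [X in X <= _](big_setID A) [X in _ <= X](big_setID (nbhd A)) /= SA SDA.
have := sum_le_subset (subsetIr (nbhd S) (nbhd A)) b_ge0.
have := sum_le_subset NS_sub b_ge0.
rewrite tight; lra.
Qed.

Lemma hall_shift a b x0 y0 d : hall_condition a b -> e x0 y0 ->
  d <= a x0 -> d <= b y0 ->
  (forall A, x0 \notin A -> y0 \in nbhd A -> [exists x in A, a x != 0] ->
     d <= slack a b A) ->
  hall_condition (shift a x0 d) (shift b y0 d).
Proof.
move=> [a_ge0 b_ge0 sum_ab hall] e0 da db d_slack; split=> [|||A].
- exact: shift_ge0.
- exact: shift_ge0.
- by rewrite !sum_shiftT sum_ab.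
rewrite !sum_shift; case x0A: (x0 \in A).
  have -> : y0 \in nbhd A by apply/nbhdP; exists x0.
  by rewrite lerD2r.
rewrite mul0r subr0; case y0NA: (y0 \in nbhd A); last by rewrite mul0r subr0.
have := d_slack A (negbT x0A) y0NA; rewrite /slack mul1r.
case: (boolP [exists x in A, a x != 0]) => [_ /(_ isT)|/existsPn no_supp _]; first by lra.
rewrite big1 => [|x xA]; last by apply/eqP; have := no_supp x; rewrite xA negbK.
have y0_sub : [set y0] \subset nbhd A by rewrite sub1set.
have := sum_le_subset y0_sub b_ge0; rewrite big_set1 subr_ge0.
exact: le_trans.
Qed.

Section Induction.
Variable n : nat.
Hypothesis IH : forall a b, (supp_size a b <= n)%N -> hall_condition a b -> has_flow a b.

Lemma has_flow_tight_split a b A x1 x2 : (supp_size a b <= n.+1)%N ->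
  hall_condition a b -> \sum_(x in A) a x = \sum_(y in nbhd A) b y ->
  x1 \in A -> a x1 != 0 -> x2 \notin A -> a x2 != 0 -> has_flow a b.
Proof.
move=> size_ab hab tight x1A ax1 x2A ax2.
have smaller A' B' x : x \notin A' -> a x != 0 ->
    (supp_size (restrict A' a) (restrict B' b) <= n)%N.
  move=> xA' ax; rewrite -ltnS (leq_trans _ size_ab) // /supp_size -addSn leq_add //.
    apply: (card_supp_lt (z := x)) => // [z /supp_restrict //|].
    by rewrite /restrict (negbTE xA').
  by apply: subset_leq_card; apply: subset_supp => z /supp_restrict.
apply: (has_flowD (fun x => esym (restrictC A a x)) (fun y => esym (restrictC (nbhd A) b y))).
  exact: IH (smaller _ _ _ x2A ax2) (hall_tight_in hab tight).
by apply: IH (smaller _ _ x1 _ ax1) (hall_tight_out hab tight); rewrite inE negbK.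
Qed.

Definition splits a b A := [&& \sum_(x in A) a x == \sum_(y in nbhd A) b y,
  [exists x in A, a x != 0] & [exists x in ~: A, a x != 0]].

Lemma hall_edge a b x0 : hall_condition a b -> 0 < a x0 ->
  exists2 y0, e x0 y0 & 0 < b y0.
Proof.
move=> [_ b_ge0 _ hall] ax0_gt0.
case: (boolP [exists y, e x0 y && (0 < b y)]) => [/existsP[y /andP[]]|/existsPn none].
  by exists y.
have := hall [set x0]; rewrite big_set1 big1 => [|y /nbhdP[x]]; first by rewrite leNgt ax0_gt0.
rewrite inE => /eqP -> exy; apply/eqP; rewrite eq_le b_ge0 andbT leNgt.
by have := none y; rewrite exy.
Qed.

Section Shift.
Variables (a : X -> R) (b : Y -> R) (x0 : X) (y0 : Y).
Hypothesis size_ab : (supp_size a b <= n.+1)%N.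
Hypothesis hab : hall_condition a b.
Hypothesis no_split : forall A, ~~ splits a b A.
Hypothesis e0 : e x0 y0.
Hypothesis ax0_gt0 : 0 < a x0.
Hypothesis by0_gt0 : 0 < b y0.

(* The sets whose slack limits how much can be moved along the edge [(x0, y0)]. *)
Definition critical A := [&& x0 \notin A, y0 \in nbhd A & [exists x in A, a x != 0]].

Let slack_gt0 A : critical A -> 0 < slack a b A.
Proof.
have [_ _ _ hall] := hab.
case/and3P=> x0A y0NA suppA; rewrite subr_gt0 lt_def hall andbT.
apply/eqP => tight; have := no_split A; rewrite /splits tight eqxx suppA /=.
by move/negP; apply; apply/existsP; exists x0; rewrite inE x0A gt_eqF.
Qed.

Let flow_unshift d : 0 <= d -> has_flow (shift a x0 d) (shift b y0 d) -> has_flow a b.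
Proof.
move=> d_ge0 flow_shift.
by apply: (has_flowD _ _ flow_shift (has_flow_edge e0 d_ge0)) => [x|y]; rewrite subrK.
Qed.

Let shift_supp (Z : finType) (F : Z -> R) z0 d : F z0 != 0 -> supp (shift F z0 d) \subset supp F.
Proof. by move=> Fz0; apply: subset_supp => z; apply: supp_shift. Qed.

Let size_shift d : (supp_size (shift a x0 d) (shift b y0 d) <= supp_size a b)%N.
Proof. by rewrite leq_add // subset_leq_card // shift_supp // gt_eqF. Qed.

(* Moving the least critical slack makes that critical set tight and splitting. *)
Lemma has_flow_critical A0 : critical A0 -> slack a b A0 < Order.min (a x0) (b y0) ->
  has_flow a b.
Proof.
move=> critA0 small; case: (arg_minP (slack a b) critA0) => A critA A_min.
set d := slack a b A.
have [d_gt0 [da db]] : 0 < d /\ d < a x0 /\ d < b y0.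
  split; first exact: slack_gt0.
  by apply/andP; rewrite -lt_min; apply: le_lt_trans (A_min _ critA0) small.
apply: (flow_unshift (ltW d_gt0)).
have [x0A y0NA /existsP[x1 /andP[x1A ax1]]] := and3P critA.
have x1x0 : x1 != x0 by apply: contraNneq x0A => <-.
apply: (has_flow_tight_split (A := A) (x1 := x1) (x2 := x0)) => //.
- exact: leq_trans (size_shift d) size_ab.
- by apply: hall_shift => //; rewrite ?ltW // => B x0B y0NB suppB; apply: A_min; apply/and3P.
- by rewrite !sum_shift (negbTE x0A) y0NA mul0r mul1r subr0 /d /slack subKr.
- by rewrite shift_id.
- by rewrite /shift eqxx mul1r subr_eq0 gt_eqF.
Qed.

(* Otherwise moving [min (a x0) (b y0)] empties [x0] or [y0]. *)
Lemma has_flow_no_critical : (forall A, critical A -> Order.min (a x0) (b y0) <= slack a b A) ->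
  has_flow a b.
Proof.
move=> big_slack; set d := Order.min (a x0) (b y0).
have d_gt0 : 0 < d by rewrite lt_min ax0_gt0.
apply: (flow_unshift (ltW d_gt0)); apply: IH; last first.
  by apply: hall_shift; rewrite ?ge_min ?lexx ?orbT // => A *; apply/big_slack/and3P.
rewrite -ltnS (leq_trans _ size_ab) // /supp_size.
have shift0 (Z : finType) (F : Z -> R) z0 : d = F z0 -> shift F z0 d z0 = 0.
  by move=> dE; rewrite /shift eqxx mul1r dE subrr.
have [dE|dE] : d = a x0 \/ d = b y0 by rewrite /d minEle; case: ifP; [left|right].
- rewrite -addSn leq_add ?subset_leq_card ?shift_supp ?gt_eqF //.
  apply: (card_supp_lt (z := x0)) => [z||]; last exact: shift0.
    by apply: supp_shift; rewrite gt_eqF.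
  by rewrite gt_eqF.
- rewrite -addnS leq_add ?subset_leq_card ?shift_supp ?gt_eqF //.
  apply: (card_supp_lt (z := y0)) => [z||]; last exact: shift0.
    by apply: supp_shift; rewrite gt_eqF.
  by rewrite gt_eqF.
Qed.

End Shift.

Lemma supply_demand_step a b : (supp_size a b <= n.+1)%N ->
  hall_condition a b -> has_flow a b.
Proof.
move=> size_ab hab; have [a_ge0 _ _ _] := hab.
case: (boolP [exists x, a x != 0]) => [/existsP[x0 ax0]|/existsPn a0]; last first.
  by apply: has_flow0 => // x; apply/eqP; rewrite -[_ == _]negbK a0.
have ax0_gt0 : 0 < a x0 by rewrite lt_def ax0 a_ge0.
case: (boolP [exists A, splits a b A]).
  case/existsP=> A /and3P[/eqP tight /existsP[x1 /andP[x1A ax1]] /existsP[x2 /andP[x2A ax2]]].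
  by apply: (has_flow_tight_split size_ab hab tight x1A ax1 _ ax2); rewrite -in_setC.
move/existsPn=> no_split; have [y0 e0 by0_gt0] := hall_edge hab ax0_gt0.
case: (boolP [exists A, critical a x0 y0 A && (slack a b A < Order.min (a x0) (b y0))]).
  case/existsP=> A /andP[critA small].
  exact: (has_flow_critical size_ab hab no_split e0 ax0_gt0 by0_gt0 critA small).
move/existsPn=> no_small; apply: (has_flow_no_critical size_ab hab e0 ax0_gt0 by0_gt0).
by move=> A critA; have := no_small A; rewrite critA /= -leNgt.
Qed.

End Induction.

Theorem supply_demand a b : hall_condition a b -> has_flow a b.
Proof.
have [n size_ab] : exists n, (supp_size a b <= n)%N by exists (supp_size a b).
elim: n a b size_ab => [|n IH] a b size_ab hab; first last.
  exact: (supply_demand_step IH size_ab hab).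
apply: has_flow0 => // x; apply/eqP; apply: contraTT size_ab => ax.
by rewrite -ltnNge /supp_size (cardD1 x) inE ax.
Qed.

End SupplyDemand.

Section CvgTo.
Local Open Scope classical_set_scope.

Lemma cvg_toP (R : realFieldType) (u : nat -> R) (l : R) :
  Defs.cvg_to u l <-> u @ \oo --> l.
Proof.
rewrite cvgrPdist_lt; split=> u_l e /u_l.
  by move=> [K K_l]; exists K => // k /K_l; rewrite distrC.
by move=> [K _ K_l]; exists K => k /K_l /=; rewrite distrC.
Qed.

End CvgTo.

Section Game.
Variables (R : realFieldType) (J D N : nat) (theta b0 : 'I_J -> R).
Variables (f : 'I_J -> 'I_D -> R) (g : nat -> R).
Hypothesis b0_ge0 : forall j, 0 <= b0 j.
Hypothesis f_ge0 : forall j d, 0 <= f j d.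
Hypothesis g_ge0 : forall n, 0 <= g n.

Local Notation Msg := (Msg D N).
Local Notation inT := (inT b0 f g).
Local Notation q := (qprob b0 f g).
Local Notation p := (post_exp theta b0 f).
Local Notation act := (act theta b0 f g).
Local Notation mass := (mass b0 f g).
Local Notation onpath := (onpath b0 f g).
Local Notation qbel0 := (qbel0 b0 f g).
Local Notation qsig := (qsig theta b0 f g).
Local Notation v := (act_sig theta b0 f g).
Local Notation ustar := (ustar theta b0 f g).
Local Notation strategy := (is_strategy b0 f g).
Local Notation abc := (abc_equilibrium theta b0 f g).
Implicit Types (s mu : Msg -> Msg -> R) (m t x y : Msg).

Lemma subm_refl m : subm m m.
Proof. exact/forallP. Qed.

Lemma subm_trans x y z : subm x y -> subm y z -> subm x z.
Proof. by move=> /forallP xy /forallP yz; apply/forallP => d; apply: leq_trans (xy d) (yz d). Qed.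

Lemma subm_anti x y : subm x y -> subm y x -> x = y.
Proof.
move=> /forallP xy /forallP yx; apply/ffunP => d; apply/val_inj/anti_leq.
by rewrite xy yx.
Qed.

Lemma q_ge0 t : 0 <= q t.
Proof.
rewrite /qprob !mulr_ge0 ?ler0n ?invr_ge0 //; apply: sumr_ge0 => j _.
by rewrite mulr_ge0 // prodr_ge0 // => d _; rewrite exprn_ge0.
Qed.

Lemma q_gt0 t : inT t -> 0 < q t.
Proof. by case/andP. Qed.

Definition mean s m := (\sum_(t | inT t) q t * s t m * p t) / mass s m.

Lemma act_sum mu m : act mu m = \sum_(t | inT t) mu m t * p t.
Proof.
rewrite /Defs.act /state_bel; under eq_bigr do rewrite mulr_suml.
rewrite exchange_big /=; apply: eq_bigr => t _.
by rewrite /post_exp mulr_sumr; apply: eq_bigr => j _; rewrite mulrA.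
Qed.

Lemma act_ext mu1 mu2 m1 m2 :
  (forall t, inT t -> mu1 m1 t = mu2 m2 t) -> act mu1 m1 = act mu2 m2.
Proof. by move=> mu12; rewrite !act_sum; apply: eq_bigr => t /mu12 ->. Qed.

Lemma act_bayes s m : act (bayes b0 f g s) m = mean s m.
Proof. by rewrite act_sum /mean mulr_suml; apply: eq_bigr => t _; rewrite mulrAC. Qed.

Lemma act_sig_inT s m : inT m -> v s m = act (qbel0 s) m.
Proof. by move=> mT; apply: act_ext => t _; rewrite /qsig mT orbT. Qed.

Lemma act_sig_onpath s m : onpath s m -> v s m = mean s m.
Proof. by move=> on_m; rewrite -act_bayes; apply: act_ext => t _; rewrite /qsig /qbel0 on_m. Qed.

Lemma act_sig_offpath s m : ~~ onpath s m -> inT m -> v s m = p m.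
Proof.
move=> off_m mT; rewrite act_sig_inT // act_sum /qbel0 (negbTE off_m).
rewrite (bigD1 m) //= eqxx mul1r big1 ?addr0 // => t /andP[_ /negbTE ->].
by rewrite mul0r.
Qed.

Lemma act_sig_offpath_nonT s m t : ~~ onpath s m -> ~~ inT m -> inT t -> subm m t ->
  v s m <= v s t.
Proof.
move=> off_m mNT tT mt; rewrite (act_sig_inT s tT).
have cand_t : cand b0 f g m t by rewrite /cand tT mt.
rewrite /act_sig act_sum /qsig (negbTE off_m) (negbTE mNT) /=.
case: pickP => [t' /andP[_ /forallP /(_ t)]|no_min]; first by rewrite -act_sum cand_t.
case: (arg_minP (act (qbel0 s)) cand_t) => t' cand_t' t'_min.
have := no_min t'; rewrite cand_t' /=; move/negbT/negP; case.
by apply/forallP => t''; apply/implyP => /t'_min.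
Qed.

Lemma ustar_ge s t m : subm m t -> v s m <= ustar s t.
Proof. by move=> mt; rewrite /ustar; apply: le_bigmax_cond. Qed.

Lemma ustar_le s t c : (forall m, subm m t -> v s m <= c) -> ustar s t <= c.
Proof. by move=> vc; apply: bigmax_le => //; apply/vc/subm_refl. Qed.

Lemma ustar_mono s x y : subm x y -> ustar s x <= ustar s y.
Proof. by move=> xy; apply: ustar_le => m mx; apply/ustar_ge/subm_trans/xy. Qed.

Lemma mass_ge s m t : strategy s -> inT t -> q t * s t m <= mass s m.
Proof.
move=> s_str tT; rewrite /Defs.mass (bigD1 t) //= lerDl.
by apply: sumr_ge0 => t' /andP[t'T _]; have [s_ge0 _ _] := s_str t' t'T; rewrite mulr_ge0 ?q_ge0.
Qed.

Lemma onpath_sent s m t : strategy s -> inT t -> 0 < s t m -> onpath s m.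
Proof.
by move=> s_str tT stm; apply: lt_le_trans (mass_ge m s_str tT); rewrite mulr_gt0 ?q_gt0.
Qed.

Lemma offpath_unsent s m t : strategy s -> ~~ onpath s m -> inT t -> s t m = 0.
Proof.
move=> s_str off_m tT; have [s_ge0 _ _] := s_str t tT.
apply/eqP; rewrite eq_le s_ge0 andbT leNgt; apply: contra off_m.
exact: onpath_sent.
Qed.

Lemma onpath_sender s m : strategy s -> onpath s m -> exists2 t, inT t & 0 < s t m.
Proof.
move=> s_str on_m; case: (boolP [exists t, inT t && (0 < s t m)]).
  by case/existsP=> t /andP[tT stm]; exists t.
move/existsPn=> no_sender; move: on_m; rewrite /onpath /Defs.mass big1 ?ltxx // => t tT.
have [s_ge0 _ _] := s_str t tT; have := no_sender t; rewrite tT /= -leNgt => stm_le0.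
have stm0 : s t m = 0 by apply/eqP; rewrite eq_le stm_le0 s_ge0.
by rewrite stm0 mulr0.
Qed.

Lemma strategy_sends s t : strategy s -> inT t -> exists m, 0 < s t m.
Proof.
move=> s_str tT; have [s_ge0 sum1 _] := s_str t tT.
case: (boolP [exists m, 0 < s t m]) => [/existsP //|/existsPn none].
have : \sum_m s t m <= 0 by apply: sumr_le0 => m _; rewrite leNgt none.
by rewrite sum1 ler10.
Qed.

Lemma strategy_truthful s t m : strategy s -> inT t -> s t t = 1 -> 0 < s t m -> m = t.
Proof.
move=> s_str tT stt1 stm; have [s_ge0 sum1 _] := s_str t tT.
apply/eqP; apply: contraTT stm => mt; rewrite -leNgt.
have rest0 : \sum_(m' | m' != t) s t m' = 0.
  by apply: (@addrI _ 1); rewrite addr0 -[X in _ = X]sum1 [in RHS](bigD1 t) //= stt1.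
by rewrite (psumr_eq0P (fun i _ => s_ge0 i) rest0).
Qed.

Lemma sum_dev_mean s m : onpath s m ->
  \sum_(t | inT t) q t * s t m * (p t - mean s m) = 0.
Proof.
move=> on_m; under eq_bigr do rewrite mulrBr.
by rewrite sumrB -mulr_suml /mean mulrC mulfVK ?subrr // gt_eqF.
Qed.

Lemma sum_dev_act s m : strategy s ->
  \sum_(t | inT t) q t * s t m * (p t - v s m) = 0.
Proof.
move=> s_str; case: (boolP (onpath s m)) => [on_m|off_m].
  by rewrite act_sig_onpath // sum_dev_mean.
by apply: big1 => t tT; rewrite (offpath_unsent s_str off_m tT) mulr0 mul0r.
Qed.

Lemma mean_lt s m c t0 : strategy s -> onpath s m ->
  (forall t, inT t -> 0 < s t m -> p t <= c) ->
  inT t0 -> 0 < s t0 m -> p t0 < c -> mean s m < c.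
Proof.
move=> s_str on_m senders_le t0T st0m pt0c.
have dev_lt0 : \sum_(t | inT t) q t * s t m * (p t - c) < 0.
  rewrite (bigD1 t0) //= -[X in _ < X](addr0 0) ltr_leD //.
    by rewrite pmulr_rlt0 ?subr_lt0 // mulr_gt0 // q_gt0.
  apply: sumr_le0 => t /andP[tT _]; have [s_ge0 _ _] := s_str t tT.
  case: (ltrP 0 (s t m)) => stm.
    by rewrite pmulr_rle0 ?subr_le0 ?senders_le // mulr_gt0 // q_gt0.
  have stm0 : s t m = 0 by apply/eqP; rewrite eq_le stm s_ge0.
  by rewrite stm0 mulr0 mul0r.
have dev_mass : \sum_(t | inT t) q t * s t m * (p t - c) =
    \sum_(t | inT t) q t * s t m * (p t - mean s m) + (mean s m - c) * mass s m.
  by rewrite /Defs.mass mulr_sumr -big_split; apply: eq_bigr => t _ /=; ring.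
by move: dev_lt0; rewrite dev_mass sum_dev_mean // add0r pmulr_llt0 // subr_lt0.
Qed.

Lemma abc_sender s t m : abc s -> inT t -> 0 < s t m ->
  [/\ subm m t, onpath s m & ustar s t = v s m].
Proof.
move=> [s_str s_br _ _ _] tT stm; have [_ _ /(_ m stm) mt] := s_str t tT.
split=> //; first exact: onpath_sent s_str tT stm.
apply/le_anti; rewrite (ustar_ge s mt) andbT.
by apply: ustar_le => m' m't; exact: (s_br t tT m stm m' m't).
Qed.

(* Replacing each type's term by the term of the message it sends can only
   increase the sum, by (c) and the monotonicity of [w]; the resulting sum
   vanishes message by message, by Bayes' rule. *)
Lemma abc_variational s w : abc s -> (forall x y, subm x y -> w x <= w y) ->
  \sum_(t | inT t) q t * ((p t - ustar s t) * (w t - ustar s t)) <= 0.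
Proof.
move=> s_abc w_mono; have [s_str _ _ _ s_c] := s_abc.
have -> : \sum_(t | inT t) q t * ((p t - ustar s t) * (w t - ustar s t)) =
    \sum_(t | inT t) \sum_m q t * s t m * ((p t - ustar s t) * (w t - ustar s t)).
  apply: eq_bigr => t tT; have [_ sum1 _] := s_str t tT.
  by rewrite -mulr_suml -mulr_sumr sum1 mulr1.
apply: (@le_trans _ _
    (\sum_(t | inT t) \sum_m q t * s t m * ((p t - v s m) * (w m - v s m)))).
  apply: ler_sum => t tT; apply: ler_sum => m _; have [s_ge0 _ _] := s_str t tT.
  case: (ltrP 0 (s t m)) => stm; last first.
    have stm0 : s t m = 0 by apply/eqP; rewrite eq_le stm s_ge0.
    by rewrite stm0 mulr0 !mul0r.
  have [mt _ ut] := abc_sender s_abc tT stm.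
  apply: ler_wpM2l; first by rewrite mulr_ge0 ?q_ge0.
  rewrite ut.
  case: (ltrP (v s m) (p t)) => [pt_gt|pt_le].
    by rewrite (strategy_truthful s_str tT (s_c t tT _) stm) // ut.
  by have := w_mono _ _ mt; nra.
rewrite exchange_big /= big1 // => m _.
rewrite (eq_bigr (fun t => (w m - v s m) * (q t * s t m * (p t - v s m)))) => [|t _].
  by rewrite -mulr_sumr sum_dev_act // mulr0.
by ring.
Qed.

Lemma abc_outcome_unique s1 s2 t : abc s1 -> abc s2 -> inT t -> ustar s1 t = ustar s2 t.
Proof.
move=> abc1 abc2 tT.
have := lerD (abc_variational abc1 (ustar_mono s2)) (abc_variational abc2 (ustar_mono s1)).
rewrite addr0 -big_split /=.
have sq_ge0 t' : 0 <= q t' * (ustar s1 t' - ustar s2 t') ^+ 2 by rewrite mulr_ge0 ?q_ge0 ?sqr_ge0.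
have -> : \sum_(t' | inT t') (q t' * ((p t' - ustar s1 t') * (ustar s2 t' - ustar s1 t')) +
      q t' * ((p t' - ustar s2 t') * (ustar s1 t' - ustar s2 t'))) =
    \sum_(t' | inT t') q t' * (ustar s1 t' - ustar s2 t') ^+ 2.
  by apply: eq_bigr => t' _; ring.
move=> sum_le0; have sum0 : \sum_(t' | inT t') q t' * (ustar s1 t' - ustar s2 t') ^+ 2 = 0.
  by apply/le_anti; rewrite sum_le0 sumr_ge0.
move: (psumr_eq0P (fun t' _ => sq_ge0 t') sum0 tT) => /eqP.
by rewrite mulf_eq0 (gt_eqF (q_gt0 tT)) sqrf_eq0 subr_eq0 => /eqP.
Qed.

Lemma mean_sole_sender s t : inT t -> 0 < s t t ->
  (forall t', inT t' -> t' != t -> s t' t = 0) -> mean s t = p t.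
Proof.
move=> tT stt others0; rewrite /mean /Defs.mass (bigD1 t) //= [X in _ / X](bigD1 t) //=.
rewrite !big1 ?addr0 => [|t' /andP[t'T t't]|t' /andP[t'T t't]];
  try by rewrite (others0 t') // ?mulr0 ?mul0r.
by rewrite mulrC mulKf // gt_eqF // mulr_gt0 // q_gt0.
Qed.

Lemma strategy_deviates s t : strategy s -> inT t -> s t t != 1 ->
  exists2 x, x != t & 0 < s t x.
Proof.
move=> s_str tT stt1; have [s_ge0 sum1 _] := s_str t tT.
case: (boolP [exists x, (x != t) && (0 < s t x)]) => [/existsP[x /andP[]]|/existsPn none].
  by exists x.
move: stt1; rewrite -sum1 (bigD1 t) //= big1 ?addr0 ?eqxx // => x xt.
by apply/eqP; rewrite eq_le s_ge0 andbT leNgt; have := none x; rewrite xt.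
Qed.

Section Perturbed.
Variables (eps epsc : Msg -> R) (s : Msg -> Msg -> R).
Hypothesis eps_gt0 : forall t, inT t -> 0 < eps t /\ 0 < epsc t.
Hypothesis s_pbe : pbe_perturbed theta b0 f g eps epsc s.

(* [t] sends [m] as a strategic type, not only as a commitment type. *)
Definition chooses t m := 0 < s t m - epsc t * (m == t)%:R.

Lemma chooses_gt0 t m : inT t -> chooses t m -> 0 < s t m.
Proof.
move=> tT; have [_ epsc_gt0] := eps_gt0 tT; rewrite /chooses subr_gt0.
by apply: le_lt_trans; rewrite mulr_ge0 ?ler0n ?ltW.
Qed.

Lemma chooses_rho t m rho : epsc t <= 1 ->
  s t m = epsc t * (m == t)%:R + (1 - epsc t) * rho t m -> 0 <= rho t m ->
  chooses t m -> 0 < rho t m.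
Proof.
move=> epsc_le1 stmE rho_ge0.
rewrite /chooses (_ : s t m - _ = (1 - epsc t) * rho t m); last by rewrite stmE; ring.
by rewrite mulr_ge0_gt0 ?subr_ge0 // => /andP[].
Qed.

Lemma pbe_strategy : strategy s.
Proof.
have [epsc_le1 [rho [mu [rho_str _ sE _ _]]]] := s_pbe.
move=> t tT; have [rho_ge0 rho1 rho_sub] := rho_str t tT.
have [_ epsc_gt0] := eps_gt0 tT; have epsc1 := epsc_le1 t tT.
split=> [m||m stm].
- by rewrite sE //; apply: addr_ge0; apply: mulr_ge0 => //; [exact: ltW|rewrite subr_ge0].
- rewrite (eq_bigr _ (fun m _ => sE t tT m)) big_split /= -!mulr_sumr rho1.
  by rewrite (eq_bigr _ (fun m _ => esym (mulr1 _))) sum_delta; ring.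
case: (eqVneq m t) => [->|mt]; first exact: subm_refl.
apply/rho_sub/(chooses_rho epsc1 (sE t tT m)) => //.
by rewrite /chooses (negbTE mt) mulr0 subr0.
Qed.

Lemma pbe_commit t : inT t -> epsc t <= s t t.
Proof.
move=> tT; have [epsc_le1 [rho [mu [rho_str _ sE _ _]]]] := s_pbe.
have [rho_ge0 _ _] := rho_str t tT.
by rewrite sE // eqxx mulr1 lerDl mulr_ge0 ?subr_ge0 ?epsc_le1.
Qed.

Lemma pbe_self_gt0 t : inT t -> 0 < s t t.
Proof. by move=> tT; apply: lt_le_trans (pbe_commit tT); case: (eps_gt0 tT). Qed.

Lemma pbe_onpath t : inT t -> onpath s t.
Proof. by move=> tT; apply: onpath_sent pbe_strategy tT (pbe_self_gt0 tT). Qed.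

Lemma pbe_best t m m' : inT t -> chooses t m -> subm m' t -> onpath s m' ->
  mean s m' + eps t * (m' == t)%:R <= mean s m + eps t * (m == t)%:R.
Proof.
move=> tT tm m't on_m'.
have [epsc_le1 [rho [mu [rho_str _ sE mu_bayes rho_br]]]] := s_pbe.
have [rho_ge0 _ _] := rho_str t tT.
have rho_tm := chooses_rho (epsc_le1 t tT) (sE t tT m) (rho_ge0 m) tm.
have actE x : onpath s x -> act mu x = mean s x.
  by move=> on_x; rewrite -act_bayes; apply: act_ext => t' t'T; apply: mu_bayes.
rewrite -!actE //; first exact: rho_br.
exact: onpath_sent pbe_strategy tT (chooses_gt0 tT tm).
Qed.

(* A type [t'] sending [t] could send [x] instead, so [mean s x <= mean s t];
   but [t] strictly prefers [x] to [t] in spite of its truth-telling bonus. *)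
Lemma pbe_deviator_truthful t x : inT t -> 0 < s t x -> x != t -> mean s t = p t.
Proof.
move=> tT stx xt; apply: (mean_sole_sender tT (pbe_self_gt0 tT)) => t' t'T t't.
have [s_ge0 _ s_sub] := pbe_strategy t'T.
apply/eqP; rewrite eq_le s_ge0 andbT leNgt; apply/negP => st't.
have [_ _ /(_ x stx) x_t] := pbe_strategy tT.
have t_t' := s_sub t st't.
have xt' : x != t' by apply: contraNneq t't => xE; apply/eqP/subm_anti => //; rewrite -xE.
have t_dev := pbe_best tT _ (subm_refl t) (pbe_onpath tT) (m := x).
have t'_dev := pbe_best t'T _ (subm_trans x_t t_t') (onpath_sent pbe_strategy tT stx) (m := t).
move: t_dev t'_dev; rewrite /chooses eqxx (negbTE xt) (negbTE xt') eq_sym (negbTE t't).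
rewrite !mulr0 !subr0 !addr0 mulr1 => /(_ stx) t_dev /(_ st't).
by have [eps_t _] := eps_gt0 tT; lra.
Qed.

Lemma pbe_sender_gain t m : inT t -> m != t -> 0 < s t m -> p t + eps t <= mean s m.
Proof.
move=> tT mt stm; rewrite -(pbe_deviator_truthful tT stm mt) -[leRHS]addr0.
have := pbe_best tT _ (subm_refl t) (pbe_onpath tT) (m := m).
by rewrite /chooses eqxx (negbTE mt) !mulr0 subr0 mulr1 => /(_ stm).
Qed.

Lemma pbe_unsent_nonT m t : ~~ inT m -> inT t -> s t m = 0.
Proof.
move=> mNT tT; have [s_ge0 _ _] := pbe_strategy tT.
apply/eqP; rewrite eq_le s_ge0 andbT leNgt; apply/negP => stm.
have on_m := onpath_sent pbe_strategy tT stm.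
have mt' t' : inT t' -> m != t' by move=> t'T; apply: contraNneq mNT => ->.
have sender_lt t' : inT t' -> 0 < s t' m -> p t' < mean s m.
  move=> t'T st'm; have := pbe_sender_gain t'T (mt' t' t'T) st'm.
  by have [eps_t' _] := eps_gt0 t'T; lra.
have := mean_lt pbe_strategy on_m (fun t' t'T st'm => ltW (sender_lt t' t'T st'm)) tT stm.
by rewrite ltxx => /(_ (sender_lt t tT stm)).
Qed.

Lemma pbe_mean_le t : inT t -> mean s t <= p t.
Proof.
move=> tT; rewrite leNgt; apply/negP => pt_lt.
have senders_le t' : inT t' -> 0 < s t' t -> p t' <= mean s t.
  move=> t'T st't; case: (eqVneq t t') => [<-|tt']; first exact: ltW.
  have := pbe_sender_gain t'T tt' st't.
  by have [eps_t' _] := eps_gt0 t'T; lra.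
have := mean_lt pbe_strategy (pbe_onpath tT) senders_le tT (pbe_self_gt0 tT) pt_lt.
by rewrite ltxx.
Qed.

End Perturbed.

Section TruthLeaning.
Local Open Scope classical_set_scope.
Variables (eps epsc : nat -> Msg -> R) (sk : nat -> Msg -> Msg -> R).
Variable s : Msg -> Msg -> R.
Hypothesis eps_gt0 : forall k t, inT t -> 0 < eps k t /\ 0 < epsc k t.
Hypothesis eps_cvg0 : forall t, inT t ->
  Defs.cvg_to (fun k => eps k t) 0 /\ Defs.cvg_to (fun k => epsc k t) 0.
Hypothesis sk_pbe : forall k, pbe_perturbed theta b0 f g (eps k) (epsc k) (sk k).
Hypothesis sk_cvg : forall t, inT t -> forall m, Defs.cvg_to (fun k => sk k t m) (s t m).

Let sk_str k : strategy (sk k) := pbe_strategy (eps_gt0 k) (sk_pbe k).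

Let eps_gt0_k k t : inT t -> 0 < eps k t.
Proof. by case/(eps_gt0 k). Qed.

Let cvg_sk t m : inT t -> sk k t m @[k --> \oo] --> s t m.
Proof. by move=> tT; apply/cvg_toP/sk_cvg. Qed.

Let cvg_eps t : inT t -> eps k t @[k --> \oo] --> 0.
Proof. by case/eps_cvg0 => /cvg_toP. Qed.

Let cvg_epsc t : inT t -> epsc k t @[k --> \oo] --> 0.
Proof. by case/eps_cvg0 => _ /cvg_toP. Qed.

Lemma tl_strategy : strategy s.
Proof.
move=> t tT; split=> [m||m stm].
- apply: (ler_cvg_to (cvg_cst 0) (cvg_sk (m := m) tT)); near=> k.
  by have [s_ge0 _ _] := sk_str k tT.
- have sum_cvg : \sum_m sk k t m @[k --> \oo] --> \sum_m s t m.
    by apply: cvg_big => [|m _]; [exact: add_continuous|exact: cvg_sk].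
  have sum1 : (fun k => \sum_m sk k t m) = fun=> 1.
    by apply/funext => k; have [_ -> _] := sk_str k tT.
  rewrite sum1 in sum_cvg.
  exact: (cvg_unique _ sum_cvg (cvg_cst (1 : R))).
- have [k sk_tm] := filter_ex (cvgr_gt _ (cvg_sk (m := m) tT) _ stm).
  by have [_ _] := sk_str k tT; apply.
Unshelve. all: end_near. Qed.

Lemma tl_mass m : mass (sk k) m @[k --> \oo] --> mass s m.
Proof.
apply: cvg_big => [|t tT]; first exact: add_continuous.
exact: cvgM (cvg_cst _) (cvg_sk tT).
Qed.

Lemma tl_mean m : onpath s m -> mean (sk k) m @[k --> \oo] --> v s m.
Proof.
move=> on_m; rewrite act_sig_onpath //; apply: cvgM.
  apply: cvg_big => [|t tT]; first exact: add_continuous.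
  by apply: cvgM (cvgM (cvg_cst _) (cvg_sk tT)) (cvg_cst _).
by apply: cvgV; [rewrite gt_eqF|exact: tl_mass].
Qed.

Lemma tl_onpath m : onpath s m -> \forall k \near \oo, onpath (sk k) m.
Proof. by move=> on_m; apply: (cvgr_gt _ (tl_mass (m := m))). Qed.

Lemma tl_chooses t m : inT t -> 0 < s t m -> \forall k \near \oo, chooses (epsc k) (sk k) t m.
Proof.
move=> tT stm; apply: (cvgr_gt (s t m - 0 * (m == t)%:R)); last by rewrite mul0r subr0.
exact: cvgB (cvg_sk tT) (cvgM (cvg_epsc tT) (cvg_cst _)).
Qed.

Lemma tl_mean_eps t m : inT t -> onpath s m ->
  mean (sk k) m + eps k t @[k --> \oo] --> v s m.
Proof. by move=> tT on_m; rewrite -[v s m]addr0; apply: cvgD (tl_mean on_m) (cvg_eps tT). Qed.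

Lemma tl_best_onpath t m m' : inT t -> 0 < s t m -> subm m' t -> onpath s m' ->
  v s m' <= v s m.
Proof.
move=> tT stm m't on_m'; have on_m := onpath_sent tl_strategy tT stm.
apply: (ler_cvg_to (tl_mean on_m') (tl_mean_eps tT on_m)); near=> k.
have tm_k : chooses (epsc k) (sk k) t m by near: k; exact: tl_chooses.
have on_m'_k : onpath (sk k) m' by near: k; exact: tl_onpath.
have := pbe_best (eps_gt0 k) (sk_pbe k) tT tm_k m't on_m'_k.
have := eps_gt0_k k tT.
by case: (m' == t); case: (m == t); rewrite ?mulr1 ?mulr0 ?addr0; lra.
Unshelve. all: end_near. Qed.

(* [m'] is off path, so it sends some [x != m'] strictly better than its own
   posterior mean, and [t] could send [x] as well. *)
Lemma tl_best_offpath m' t m : inT m' -> ~~ onpath s m' -> inT t -> subm m' t ->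
  0 < s t m -> p m' <= v s m.
Proof.
move=> m'T off_m' tT m't stm.
have [x sx] := strategy_sends tl_strategy m'T.
have xm' : x != m'.
  by apply: contraTneq sx => ->; rewrite (offpath_unsent tl_strategy off_m' m'T) ltxx.
have [_ _ /(_ x sx) x_m'] := tl_strategy m'T.
have on_x := onpath_sent tl_strategy m'T sx.
apply: (ler_cvg_to (cvg_cst _) (tl_mean_eps tT (onpath_sent tl_strategy tT stm))); near=> k.
have sx_k : 0 < sk k m' x by near: k; apply: (cvgr_gt _ (cvg_sk m'T)).
have tm_k : chooses (epsc k) (sk k) t m by near: k; exact: tl_chooses.
have on_x_k : onpath (sk k) x by near: k; exact: tl_onpath.
have := pbe_sender_gain (eps_gt0 k) (sk_pbe k) m'T xm' sx_k.
have := pbe_best (eps_gt0 k) (sk_pbe k) tT tm_k (subm_trans x_m' m't) on_x_k.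
have := eps_gt0_k k m'T; have := eps_gt0_k k tT.
by case: (x == t); case: (m == t); rewrite ?mulr1 ?mulr0 ?addr0; lra.
Unshelve. all: end_near. Qed.

Lemma tl_best_response : best_response_to theta b0 f g (qsig s) s.
Proof.
move=> t tT m stm m' m't; rewrite -/(v s m') -/(v s m).
have v_t : v s t <= v s m.
  case: (boolP (onpath s t)) => [on_t|off_t].
    exact: tl_best_onpath tT stm (subm_refl t) on_t.
  by rewrite act_sig_offpath //; exact: (tl_best_offpath tT off_t tT (subm_refl t) stm).
case: (boolP (onpath s m')) => [on_m'|off_m']; first exact: tl_best_onpath tT stm m't on_m'.
case: (boolP (inT m')) => [m'T|m'NT].
  by rewrite act_sig_offpath //; exact: (tl_best_offpath m'T off_m' tT m't stm).
exact: le_trans (act_sig_offpath_nonT off_m' m'NT tT m't) v_t.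
Qed.

Lemma tl_prop_a : prop_a b0 f g s.
Proof.
move=> m on_m; apply/negPn/negP => mNT.
have mass0 : (fun k => mass (sk k) m) = fun=> 0.
  apply/funext => k; apply: big1 => t tT.
  by rewrite (pbe_unsent_nonT (eps_gt0 k) (sk_pbe k) mNT tT) mulr0.
have := tl_mass (m := m); rewrite mass0 => cvg_mass.
have mass_s0 : mass s m = 0 by exact: (cvg_unique _ cvg_mass (cvg_cst (0 : R))).
by move: on_m; rewrite /onpath mass_s0 ltxx.
Qed.

Lemma tl_prop_b : prop_b theta b0 f g s.
Proof.
move=> t tT p_lt; apply/negP => on_t.
have [t' t'T st't] := onpath_sender tl_strategy on_t.
have [_ _ /(_ t st't) t_t'] := tl_strategy t'T.
have u_le : ustar s t <= v s t.
  by apply: ustar_le => x x_t; exact: (tl_best_response t'T st't (subm_trans x_t t_t')).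
have v_le : v s t <= p t.
  apply: (ler_cvg_to (tl_mean on_t) (cvg_cst (p t))); near=> k.
  exact: (pbe_mean_le (eps_gt0 k) (sk_pbe k) tT).
by have := lt_le_trans p_lt (le_trans u_le v_le); rewrite ltxx.
Unshelve. all: end_near. Qed.

Lemma tl_prop_c : prop_c theta b0 f g s.
Proof.
move=> t tT u_lt; apply/eqP; apply: contraTT u_lt => stt1; rewrite -leNgt.
have [x xt sx] := strategy_deviates tl_strategy tT stt1.
have [_ _ /(_ x sx) x_t] := tl_strategy tT.
apply: le_trans (ustar_ge s x_t).
apply: (ler_cvg_to (cvg_cst _) (tl_mean (onpath_sent tl_strategy tT sx))); near=> k.
have sx_k : 0 < sk k t x by near: k; apply: (cvgr_gt _ (cvg_sk tT)).
have := pbe_sender_gain (eps_gt0 k) (sk_pbe k) tT xt sx_k.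
by have := eps_gt0_k k tT; lra.
Unshelve. all: end_near. Qed.

End TruthLeaning.

Lemma truth_leaning_abc s : truth_leaning theta b0 f g s -> abc s.
Proof.
move=> [eps [epsc [sk [eps_gt0 eps_cvg0 sk_pbe sk_cvg]]]].
split.
- exact: (tl_strategy eps_gt0 sk_pbe sk_cvg).
- exact: (tl_best_response eps_gt0 eps_cvg0 sk_pbe sk_cvg).
- exact: (tl_prop_a eps_gt0 sk_pbe sk_cvg).
- exact: (tl_prop_b eps_gt0 eps_cvg0 sk_pbe sk_cvg).
- exact: (tl_prop_c eps_gt0 sk_pbe sk_cvg).
Qed.

Section Existence.
Implicit Types (Rem U W : {set Msg}) (u : Msg -> R).

Definition upclosed Rem W :=
  (W \subset Rem) && [forall x in W, forall y in Rem, subm x y ==> (y \in W)].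

Definition dev (c : R) W := \sum_(t in W) q t * (p t - c).

Definition avg W := (\sum_(t in W) q t * p t) / \sum_(t in W) q t.

Definition avg_bound Rem (c : R) :=
  forall W, W != set0 -> upclosed Rem W -> dev c W <= 0.

Lemma upclosedP Rem W : reflect
  (W \subset Rem /\ forall x y, x \in W -> y \in Rem -> subm x y -> y \in W)
  (upclosed Rem W).
Proof.
apply: (iffP andP) => -[WR W_up]; split=> //.
  by move=> x y xW yR; move/forall_inP/(_ x xW)/forall_inP/(_ y yR)/implyP: W_up.
by apply/forall_inP => x xW; apply/forall_inP => y yR; apply/implyP; apply: W_up.
Qed.

Lemma dev_eq c W : dev c W = \sum_(t in W) q t * p t - c * \sum_(t in W) q t.
Proof. by rewrite /dev mulr_sumr -sumrB; apply: eq_bigr => t _; ring. Qed.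

Lemma dev_setU c W1 W2 : [disjoint W1 & W2] -> dev c (W1 :|: W2) = dev c W1 + dev c W2.
Proof. by move=> W12; rewrite /dev -bigU //; apply: eq_bigl => t; rewrite inE. Qed.

Lemma wsum_gt0 Rem W : (forall t, t \in Rem -> inT t) -> W != set0 -> W \subset Rem ->
  0 < \sum_(t in W) q t.
Proof.
move=> RemT /set0Pn[t0 t0W] /subsetP WR; rewrite (bigD1 t0) //= ltr_pwDl ?q_gt0 ?RemT ?WR //.
by apply: sumr_ge0 => t _; apply: q_ge0.
Qed.

(* [s] is an equilibrium with outcome [u] among the types of [Rem]; [pe_below]
   is what keeps [u] monotone when a new layer is added on top. *)
Record partial_eq Rem u s : Prop := PartialEq {
  pe_strategy : forall t, t \in Rem ->
    [/\ forall m, 0 <= s t m, \sum_m s t m = 1 &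
        forall m, 0 < s t m -> [/\ subm m t, m \in Rem & u m = u t]];
  pe_mono : forall x t, x \in Rem -> t \in Rem -> subm x t -> u x <= u t;
  pe_bayes : forall m, m \in Rem -> \sum_(t in Rem) q t * s t m * (p t - u m) = 0;
  pe_truthful : forall t, t \in Rem -> u t < p t -> s t t = 1;
  pe_silent : forall t, t \in Rem -> p t < u t -> forall t', t' \in Rem -> s t' t = 0;
  pe_below : forall c, avg_bound Rem c -> forall t, t \in Rem -> u t <= c }.

Lemma partial_eq0 u s : partial_eq set0 u s.
Proof. by split=> [t|x t|m|t|t|c _ t]; rewrite inE. Qed.

Section Extend.
Variables (Rem U : {set Msg}) (c : R) (u' : Msg -> R) (s' : Msg -> Msg -> R).
Hypothesis RemT : forall t, t \in Rem -> inT t.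
Hypothesis U_neq0 : U != set0.
Hypothesis U_up : upclosed Rem U.
Hypothesis U_dev : dev c U = 0.
Hypothesis c_bound : avg_bound Rem c.
Hypothesis pe' : partial_eq (Rem :\: U) u' s'.

Let U_Rem t : t \in U -> t \in Rem.
Proof. by have [/subsetP + _] := upclosedP _ _ U_up; apply. Qed.

Let U_upP x y : x \in U -> y \in Rem -> subm x y -> y \in U.
Proof. by have [_] := upclosedP _ _ U_up; apply. Qed.

Let RemD t : t \in Rem -> t \notin U -> t \in Rem :\: U.
Proof. by move=> tR tU; rewrite inE tU. Qed.

Lemma avg_bound_diff : avg_bound (Rem :\: U) c.
Proof.
move=> W W_neq0 /upclosedP[/subsetP WR W_up].
have WU_up : upclosed Rem (W :|: U).
  apply/upclosedP; split.
    by apply/subsetP => x /setUP[/WR/setDP[]|/U_Rem].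
  move=> x y /setUP[xW|xU] yR xy; last by rewrite inE (U_upP xU yR xy) orbT.
  by case: (boolP (y \in U)) => [yU|yU]; rewrite inE ?yU ?orbT // (W_up x) ?RemD.
have W_U : [disjoint W & U].
  by rewrite disjoints_subset; apply/subsetP => x /WR; rewrite !inE => /andP[].
have := c_bound _ WU_up; rewrite dev_setU // U_dev addr0; apply.
by case/set0Pn: W_neq0 => x xW; apply/set0Pn; exists x; rewrite inE xW.
Qed.

Lemma c_le_bound c' : avg_bound Rem c' -> c <= c'.
Proof.
move=> c'_bound; have := c'_bound _ U_neq0 U_up; have := U_dev.
have [UR _] := upclosedP _ _ U_up; have := wsum_gt0 RemT U_neq0 UR.
rewrite !dev_eq; nra.
Qed.

Definition low l := if (l \in U) && (p l < c) then q l * (c - p l) else 0.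
Definition high h := if (h \in U) && (c < p h) then q h * (p h - c) else 0.

Lemma high_sub_low x : high x - low x = if x \in U then q x * (p x - c) else 0.
Proof.
rewrite /low /high; case: (x \in U) => /=; last by rewrite subr0.
case: (ltrgtP (p x) c) => [_|_|->] /=; first by rewrite sub0r -mulrN opprB.
  by rewrite subr0.
by rewrite !subrr mulr0.
Qed.

Lemma low_ge0 x : 0 <= low x.
Proof. by rewrite /low; case: ifP => // /andP[_ ?]; rewrite mulr_ge0 ?q_ge0 ?subr_ge0 ?ltW. Qed.

Lemma high_ge0 x : 0 <= high x.
Proof. by rewrite /high; case: ifP => // /andP[_ ?]; rewrite mulr_ge0 ?q_ge0 ?subr_ge0 ?ltW. Qed.

(* Hall's condition holds because the part of [U] outside the subsets of
   the low types is again an upper set, whose deviation is nonpositive. *)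
Lemma hall_low_high : hall_condition (fun l h => subm h l) low high.
Proof.
have sum_hl (B : {set Msg}) : \sum_(x in B) (high x - low x) = dev c (U :&: B).
  rewrite /dev big_mkcond [RHS]big_mkcond; apply: eq_bigr => x _.
  by rewrite high_sub_low !inE; case: (x \in U); case: (x \in B).
split=> [||| A]; [exact: low_ge0|exact: high_ge0| |].
  have sumT : \sum_x (high x - low x) = \sum_(x in [set: Msg]) (high x - low x).
    by apply: eq_bigl => x; rewrite inE.
  by apply/eqP; rewrite eq_sym -subr_eq0 -sumrB sumT sum_hl setIT U_dev.
set NA := nbhd _ A.
have A_NA : A \subset NA by apply/subsetP => x xA; apply/nbhdP; exists x; rewrite ?subm_refl.
apply: le_trans (sum_le_subset A_NA low_ge0) _; rewrite -subr_ge0 -sumrB sum_hl.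
have dev_out : dev c (U :\: NA) <= 0.
  case: (eqVneq (U :\: NA) set0) => [->|out_neq0]; first by rewrite /dev big_set0.
  apply: c_bound out_neq0 _; apply/upclosedP; split.
    by apply/subsetP => x /setDP[/U_Rem].
  move=> x y /setDP[xU xNA] yR xy; rewrite inE (U_upP xU yR xy) andbT.
  by apply: contra xNA => /nbhdP[l lA yl]; apply/nbhdP; exists l => //; apply: subm_trans xy yl.
by move: U_dev; rewrite /dev (big_setID NA) /= -!/(dev _ _); lra.
Qed.

Section Flow.
Variable F : Msg -> Msg -> R.
Hypothesis F_ge0 : forall l h, 0 <= F l h.
Hypothesis F_sub : forall l h, 0 < F l h -> subm h l.
Hypothesis F_low : forall l, \sum_h F l h = low l.
Hypothesis F_high : forall h, \sum_l F l h = high h.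

Let F_high_pos l h : 0 < F l h -> (h \in U) && (c < p h).
Proof.
move=> Flh; have : F l h <= high h.
  by rewrite -F_high (bigD1 l) //= lerDl sumr_ge0.
by rewrite /high; case: ifP => // _; rewrite leNgt Flh.
Qed.

Let F_low0 l h : low l = 0 -> F l h = 0.
Proof.
move=> low0; have sum0 : \sum_h F l h = 0 by rewrite F_low.
exact: (psumr_eq0P (fun h _ => F_ge0 l h) sum0).
Qed.

Let low_gt0 t : t \in U -> p t < c -> 0 < low t.
Proof. by move=> tU ptc; rewrite /low tU ptc mulr_gt0 ?q_gt0 ?RemT ?U_Rem ?subr_gt0. Qed.

(* Low types of [U] spread over the high types of [U] along the flow [F];
   the other types of [U] are truthful. *)
Definition u_ext t := if t \in U then c else u' t.
Definition s_ext t m :=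
  if t \in U then (if p t < c then F t m / low t else if m == t then 1 else 0)
  else s' t m.

Let s_ext_ge0 t m : t \in Rem -> 0 <= s_ext t m.
Proof.
move=> tR; rewrite /s_ext; case: ifP => [tU|tU].
  by case: ifP => _; rewrite ?divr_ge0 ?F_ge0 ?low_ge0 //; case: ifP.
by have [+ _ _] := pe_strategy pe' (RemD tR (negbT tU)); apply.
Qed.

Let s_ext0 t m : t \in Rem -> ~~ (0 < s_ext t m) -> s_ext t m = 0.
Proof. by move=> tR stm; apply/eqP; rewrite eq_le s_ext_ge0 // andbT leNgt. Qed.

Let s_ext_U t m : t \in U -> 0 < s_ext t m ->
  [/\ m \in U, subm m t & p t < c -> c < p m].
Proof.
move=> tU; rewrite /s_ext tU; case: ifP => [ptc stm|ptc].
  have inv_gt0 : 0 < (low t)^-1 by rewrite invr_gt0 low_gt0.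
  move: stm; rewrite pmulr_lgt0 // => Ftm.
  by have /andP[mU cpm] := F_high_pos Ftm; split=> //; apply: F_sub.
by case: eqP => [->|_]; rewrite ?ltxx // => _; split; rewrite ?subm_refl ?ptc.
Qed.

Let s_ext_out t m : t \in Rem :\: U -> 0 < s_ext t m ->
  [/\ subm m t, m \in Rem :\: U & u' m = u' t].
Proof.
move=> tR; rewrite /s_ext; have [_ tR'] := setDP tR; rewrite (negbTE tR').
by have [_ _] := pe_strategy pe' tR; apply.
Qed.

Lemma ext_strategy t : t \in Rem ->
  [/\ forall m, 0 <= s_ext t m, \sum_m s_ext t m = 1 &
      forall m, 0 < s_ext t m -> [/\ subm m t, m \in Rem & u_ext m = u_ext t]].
Proof.
move=> tR; split=> [m||m stm]; first exact: s_ext_ge0.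
  rewrite /s_ext; case: (boolP (t \in U)) => tU; last first.
    by have [_ -> _] := pe_strategy pe' (RemD tR tU).
  case: (boolP (p t < c)) => ptc.
    by rewrite -mulr_suml F_low mulfV // gt_eqF // low_gt0.
  by rewrite (bigD1 t) //= eqxx big1 ?addr0 // => m /negbTE ->.
case: (boolP (t \in U)) => [tU|tU].
  by have [mU mt _] := s_ext_U tU stm; rewrite /u_ext tU mU; split=> //; apply: U_Rem.
have [mt /setDP[mR mU] um] := s_ext_out (RemD tR tU) stm.
by rewrite /u_ext (negbTE tU) (negbTE mU).
Qed.

Lemma ext_mono x t : x \in Rem -> t \in Rem -> subm x t -> u_ext x <= u_ext t.
Proof.
move=> xR tR xt; rewrite /u_ext; case: ifP => xU; first by rewrite (U_upP xU tR xt).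
case: ifP => tU; first exact: (pe_below pe' avg_bound_diff (RemD xR (negbT xU))).
exact: (pe_mono pe' (RemD xR (negbT xU)) (RemD tR (negbT tU)) xt).
Qed.

Let bayes_U_term t m : t \in U ->
  q t * s_ext t m * (p t - c) = (if t == m then high m else 0) - F t m.
Proof.
move=> tU; have qt_gt0 := q_gt0 (RemT (U_Rem tU)).
rewrite /s_ext tU; case: ifP => ptc.
  have -> : (if t == m then high m else 0) = 0.
    by case: eqP => [<-|//]; rewrite /high ltNge (ltW ptc) andbF.
  rewrite sub0r /low tU ptc /=; field.
  by rewrite subr_eq0 gt_eqF //= gt_eqF.
rewrite F_low0 ?subr0; last by rewrite /low ptc andbF.
rewrite eq_sym; case: eqP => [<-|_]; last by rewrite mulr0 mul0r.
rewrite mulr1 /high tU /=; case: ltrP => // cpt.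
have pt_c : p t = c by apply/le_anti; rewrite cpt leNgt ptc.
by rewrite pt_c subrr mulr0.
Qed.

Lemma ext_bayes m : m \in Rem ->
  \sum_(t in Rem) q t * s_ext t m * (p t - u_ext m) = 0.
Proof.
move=> mR; rewrite (big_setID U) /= (setIidPr (upclosedP _ _ U_up).1) /u_ext.
case: ifP => mU.
  rewrite [X in _ + X]big1 => [|t /setDP[tR tU]]; last first.
    rewrite s_ext0 ?mulr0 ?mul0r //; apply/negP => /(s_ext_out (RemD tR tU)).
    by case=> _ /setDP[_]; rewrite mU.
  rewrite addr0 (eq_bigr _ (fun t tU => bayes_U_term m tU)) sumrB.
  rewrite (bigD1 m) //= eqxx big1 ?addr0 => [|t /andP[_ /negbTE ->] //].
  have -> : \sum_(t in U) F t m = \sum_t F t m.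
    rewrite [RHS](sum_restrictC U) [X in _ + X]big1 ?addr0 // => t.
    by rewrite inE => tU; rewrite F_low0 // /low (negbTE tU).
  by rewrite F_high subrr.
rewrite big1 ?add0r => [|t tU]; last first.
  rewrite s_ext0 ?mulr0 ?mul0r ?U_Rem //; apply/negP => /(s_ext_U tU).
  by case; rewrite mU.
rewrite -[RHS](pe_bayes pe' (RemD mR (negbT mU))); apply: eq_bigr => t /setDP[_ tU].
by rewrite /s_ext (negbTE tU).
Qed.

Lemma ext_truthful t : t \in Rem -> u_ext t < p t -> s_ext t t = 1.
Proof.
move=> tR; rewrite /u_ext /s_ext; case: ifP => tU ut; first by rewrite ltNge (ltW ut) /= eqxx.
exact: (pe_truthful pe' (RemD tR (negbT tU)) ut).
Qed.

Lemma ext_silent t : t \in Rem -> p t < u_ext t ->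
  forall t', t' \in Rem -> s_ext t' t = 0.
Proof.
move=> tR pt t' t'R; apply: (s_ext0 t'R); apply/negP => st't.
case: (boolP (t' \in U)) => [t'U|t'U].
  have [tU _ t_high] := s_ext_U t'U st't; move: pt; rewrite /u_ext tU => ptc.
  case: (ltrP (p t') c) => [/t_high|cpt']; first by rewrite ltNge (ltW ptc).
  move: st't; rewrite /s_ext t'U ifN -?leNgt //; case: eqP => [tt'|]; last by rewrite ltxx.
  by move: ptc; rewrite tt' ltNge cpt'.
have [_ /setDP[_ tU] _] := s_ext_out (RemD t'R t'U) st't.
move: pt st't; rewrite /u_ext /s_ext (negbTE tU) (negbTE t'U) => pt.
by rewrite (pe_silent pe' (RemD tR tU) pt (RemD t'R t'U)) ltxx.
Qed.

Lemma ext_below c' : avg_bound Rem c' -> forall t, t \in Rem -> u_ext t <= c'.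
Proof.
move=> c'_bound t tR; apply: le_trans (c_le_bound c'_bound); rewrite /u_ext.
by case: ifP => // tU; apply: (pe_below pe' avg_bound_diff (RemD tR (negbT tU))).
Qed.

End Flow.

Lemma partial_eq_extend : exists u s, partial_eq Rem u s.
Proof.
have [F [F_ge0 F_sub F_low F_high]] := supply_demand hall_low_high.
exists u_ext, (s_ext F); split.
- exact: ext_strategy.
- exact: ext_mono.
- exact: ext_bayes.
- exact: ext_truthful.
- exact: ext_silent.
- exact: ext_below.
Qed.

End Extend.

Lemma partial_eq_exists Rem : (forall t, t \in Rem -> inT t) -> exists u s, partial_eq Rem u s.
Proof.
have [n] := ubnP #|Rem|; elim: n Rem => // n IH Rem /ltnSE Rem_n RemT.
case: (eqVneq Rem set0) => [->|Rem_neq0].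
  by exists (fun=> 0), (fun _ _ => 0); apply: partial_eq0.
pose P W := (W != set0) && upclosed Rem W.
have wsum_gt0 W : P W -> 0 < \sum_(t in W) q t.
  by case/andP=> W_neq0 /upclosedP[WR _]; apply: wsum_gt0 RemT W_neq0 WR.
have PRem : P Rem by rewrite /P Rem_neq0; apply/upclosedP.
case: (arg_maxP avg PRem) => U PU U_max; have [U_neq0 U_up] := andP PU.
have U_dev : dev (avg U) U = 0 by rewrite dev_eq /avg mulfVK ?subrr // gt_eqF ?wsum_gt0.
have U_bound : avg_bound Rem (avg U).
  move=> W W_neq0 W_up; have PW : P W by apply/andP.
  by rewrite dev_eq subr_le0 -ler_pdivrMr ?wsum_gt0 //; apply: U_max.
have [u' [s' pe']] : exists u' s', partial_eq (Rem :\: U) u' s'.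
  apply: IH => [|t /setDP[/RemT //]]; apply: leq_trans Rem_n.
  apply: proper_card; apply/properP; split; first exact: subsetDl.
  have [/subsetP UR _] := upclosedP _ _ U_up.
  by case/set0Pn: U_neq0 => x xU; exists x; rewrite ?UR // inE xU.
exact: partial_eq_extend RemT U_neq0 U_up U_dev U_bound pe'.
Qed.


Section FromPartial.
Variables (u : Msg -> R) (s : Msg -> Msg -> R).
Hypothesis pe : partial_eq [set t | inT t] u s.

Let inTE t : (t \in [set t | inT t]) = inT t.
Proof. by rewrite inE. Qed.

Let memT t : inT t -> t \in [set t | inT t].
Proof. by rewrite inTE. Qed.

Let pe_sent t m : inT t -> 0 < s t m -> [/\ subm m t, inT m & u m = u t].
Proof.
by move=> tT stm; have [_ _ /(_ m stm)] := pe_strategy pe (memT tT); rewrite inTE.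
Qed.

Lemma pe_is_strategy : strategy s.
Proof.
move=> t tT; have [s_ge0 sum1 s_sub] := pe_strategy pe (memT tT).
by split=> // m /(pe_sent tT) [].
Qed.

Lemma pe_act_onpath m : inT m -> onpath s m -> v s m = u m.
Proof.
move=> mT on_m; rewrite act_sig_onpath //.
have bayes := pe_bayes pe (memT mT).
rewrite (eq_bigl (fun t => inT t)) in bayes => [|t]; last exact: inTE.
have diff : \sum_(t | inT t) q t * s t m * (p t - u m) -
    \sum_(t | inT t) q t * s t m * (p t - mean s m) = (mean s m - u m) * mass s m.
  by rewrite -sumrB /Defs.mass mulr_sumr; apply: eq_bigr => t _; ring.
move: diff; rewrite bayes sum_dev_mean // subrr => /esym/eqP.
by rewrite mulf_eq0 (gt_eqF on_m) orbF subr_eq0 => /eqP.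
Qed.

Lemma pe_act_le m : inT m -> v s m <= u m.
Proof.
move=> mT; case: (boolP (onpath s m)) => [on_m|off_m]; first by rewrite pe_act_onpath.
rewrite act_sig_offpath // leNgt; apply: contra off_m => um.
by apply: (onpath_sent pe_is_strategy mT); rewrite (pe_truthful pe _ um) ?inTE ?ltr01.
Qed.

Lemma pe_act_sub t m' : inT t -> subm m' t -> v s m' <= u t.
Proof.
move=> tT m't; case: (boolP (inT m')) => [m'T|m'NT].
  by apply: le_trans (pe_act_le m'T) _; apply: (pe_mono pe); rewrite ?inTE.
have off_m' : ~~ onpath s m'.
  apply: contra m'NT => /(onpath_sender pe_is_strategy)[t' t'T st'm'].
  by have [] := pe_sent t'T st'm'.
exact: le_trans (act_sig_offpath_nonT off_m' m'NT tT m't) (pe_act_le tT).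
Qed.

Lemma pe_act_sent t m : inT t -> 0 < s t m -> v s m = u t.
Proof.
move=> tT stm; have [_ mT <-] := pe_sent tT stm.
exact: pe_act_onpath mT (onpath_sent pe_is_strategy tT stm).
Qed.

Lemma pe_ustar t : inT t -> ustar s t = u t.
Proof.
move=> tT; apply/le_anti; rewrite ustar_le /= => [|m' m't]; last exact: pe_act_sub.
have [m stm] := strategy_sends pe_is_strategy tT.
by rewrite -(pe_act_sent tT stm) ustar_ge //; have [] := pe_sent tT stm.
Qed.

Lemma pe_abc : abc s.
Proof.
split=> [|t tT m stm m' m't|m on_m|t tT|t tT].
- exact: pe_is_strategy.
- by rewrite -/(v s m') -/(v s m) (pe_act_sent tT stm); apply: pe_act_sub.
- by have [t tT /(pe_sent tT)[]] := onpath_sender pe_is_strategy on_m.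
- rewrite pe_ustar // => put; rewrite /onpath /Defs.mass big1 ?ltxx // => t' t'T.
  by rewrite (pe_silent pe _ put) ?inTE // mulr0.
- by rewrite pe_ustar // => upt; apply: (pe_truthful pe); rewrite ?inTE.
Qed.

End FromPartial.

Lemma abc_exists : exists s, abc s.
Proof.
have [u [s pe]] : exists u s, partial_eq [set t | inT t] u s.
  by apply: partial_eq_exists => t; rewrite inE.
by exists s; apply: pe_abc pe.
Qed.

End Existence.

End Game.

Theorem lemma1 (R : realFieldType) (J D N : nat)
  (theta b0 : 'I_J -> R) (f : 'I_J -> 'I_D -> R) (g : nat -> R)
  (hN : (0 < N)%N)
  (htheta : forall i j : 'I_J, (i <= j)%N -> theta i <= theta j)
  (hb0 : (forall j, 0 <= b0 j) /\ \sum_(j < J) b0 j = 1)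
  (hf : forall j, (forall d, 0 <= f j d) /\ \sum_(d < D) f j d = 1)
  (hg : [/\ forall n, 0 <= g n, forall n, (N < n)%N -> g n = 0,
            \sum_(n < N.+1) g n = 1 & 0 < g N]) :
  (* every truth-leaning equilibrium strategy is a best response to q_sigma and satisfies (a)-(c) *)
  (forall s : Msg D N -> Msg D N -> R,
     truth_leaning theta b0 f g s ->
     [/\ best_response_to theta b0 f g (qsig theta b0 f g s) s,
         prop_a b0 f g s, prop_b theta b0 f g s & prop_c theta b0 f g s])
  (* existence of an equilibrium with (a)-(c) *)
  /\ (exists s : Msg D N -> Msg D N -> R, abc_equilibrium theta b0 f g s)
  (* all such equilibria have the same outcome *)
  /\ (forall s1 s2 : Msg D N -> Msg D N -> R,
        abc_equilibrium theta b0 f g s1 -> abc_equilibrium theta b0 f g s2 ->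
        forall t, inT b0 f g t -> ustar theta b0 f g s1 t = ustar theta b0 f g s2 t)
  (* which coincides with the truth-leaning equilibrium outcome *)
  /\ (forall s s' : Msg D N -> Msg D N -> R,
        abc_equilibrium theta b0 f g s -> truth_leaning theta b0 f g s' ->
        forall t, inT b0 f g t -> ustar theta b0 f g s t = ustar theta b0 f g s' t).
Proof.
have b0_ge0 j : 0 <= b0 j by case: hb0.
have f_ge0 j d : 0 <= f j d by case: (hf j).
have g_ge0 n : 0 <= g n by case: hg.
have tl_abc s : truth_leaning theta b0 f g s -> abc_equilibrium theta b0 f g s.
  by apply: truth_leaning_abc.
split; [|split; [|split]].
- by move=> s /tl_abc[].
- by apply: abc_exists.
- by move=> s1 s2 abc1 abc2 t; apply: abc_outcome_unique.
- by move=> s s' abc_s /tl_abc abc_s' t; apply: abc_outcome_unique.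
Qed.
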